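(* Let $p$ be a prime, $k\ge 1$ and $n\ge 0$ integers, $\alpha_0,\dots,\alpha_{n-1}\in\mathbb{Z}_p$ and $r_0,\dots,r_{n-1}$ nonnegative integers, with $|r|=r_0+\cdots+r_{n-1}$. Define $$\check{D}_{n;\bar{\alpha},\bar{r}}^{(k)}=\int_{\mathbb{Z}_p}\cdots\int_{\mathbb{Z}_p}\prod_{i=0}^{n-1}(x_1x_2\cdots x_k-\alpha_i)^{r_i}\,d\mu_0(x_1)\cdots d\mu_0(x_k).$$ Then $$\check{D}_{n;\bar{\alpha},\bar{r}}^{(k)}=\sum_{m=0}^{|r|}s_{\bar{\alpha}}(n,m;\bar{r})\sum_{\ell_1=0}^{m}\cdots\sum_{\ell_k=0}^{m}\prod_{i=1}^{k}\frac{(-1)^{\ell_i}\,\ell_i!\,S(m,\ell_i)}{\ell_i+1}.$$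
   Context: For a polynomial (more generally uniformly differentiable) function $f:\mathbb{Z}_p\to\mathbb{C}_p$, the Volkenborn ($p$-adic invariant) integral is $\int_{\mathbb{Z}_p}f(x)\,d\mu_0(x)=\lim_{N\to\infty}p^{-N}\sum_{x=0}^{p^N-1}f(x)$; multiple integrals are iterated integrals in each variable. $S(m,\ell)$ are the Stirling numbers of the second kind, $x^m=\sum_{\ell=0}^m S(m,\ell)x(x-1)\cdots(x-\ell+1)$. The generalized Comtet numbers of the first kind $s_{\bar\alpha}(n,m;\bar r)$ are defined by $\prod_{i=0}^{n-1}(x-\alpha_i)^{r_i}=\sum_{m=0}^{|r|}s_{\bar\alpha}(n,m;\bar r)x^m$, where $\bar\alpha=(\alpha_0,\dots,\alpha_{n-1})$, $\bar r=(r_0,\dots,r_{n-1})$. *)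

From HB Require Import structures.
From mathcomp Require Import all_boot all_order all_algebra.
From mathcomp Require Import reals.
From Stdlib Require Import ClassicalEpsilon.
Set Implicit Arguments. Unset Strict Implicit. Unset Printing Implicit Defensive.
Import Order.TTheory GRing.Theory Num.Theory.
Local Open Scope ring_scope.

(* A (non-archimedean) p-adic absolute value on a field K: K together with a
   stands for C_p (or any valued field extending Q_p); the elements x with
   a x <= 1 play the role of the valuation ring (containing Z_p). *)
Record padic_abs (p : nat) (R : realType) (K : fieldType) (a : K -> R) : Prop := {
  pa_ge0 : forall x, 0 <= a x;
  pa_eq0 : forall x, a x = 0 <-> x = 0;
  pa_mul : forall x y, a (x * y) = a x * a y;
  pa_ultra : forall x y, a (x + y) <= Num.max (a x) (a y);
  pa_p : a (p%:R) = (p%:R)^-1 }.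

(* The Volkenborn integral of f (only its values at 0,1,2,... enter):
   L = lim_N p^{-N} sum_{x=0}^{p^N-1} f x, the limit w.r.t. a. *)
Definition has_volk (p : nat) (R : realType) (K : fieldType) (a : K -> R)
  (f : nat -> K) (L : K) : Prop :=
  forall eps : R, 0 < eps -> exists N0 : nat, forall N : nat, (N0 <= N)%N ->
    a (((p ^ N)%:R)^-1 * (\sum_(x < p ^ N) f x) - L) < eps.

Definition volk (p : nat) (R : realType) (K : fieldType) (a : K -> R)
  (f : nat -> K) : K :=
  epsilon (inhabits 0) (has_volk p a f).

Fixpoint mvolk (p : nat) (R : realType) (K : fieldType) (a : K -> R)
  (k : nat) (F : seq nat -> K) : K :=
  match k with
  | 0 => F [::]
  | k'.+1 => volk p a (fun x => mvolk p a k' (fun xs => F (x :: xs)))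
  end.

Fixpoint stirling2 (m l : nat) : nat :=
  match m, l with
  | 0, 0 => 1
  | 0, _.+1 => 0
  | _.+1, 0 => 0
  | m'.+1, l'.+1 => l'.+1 * stirling2 m' l'.+1 + stirling2 m' l'
  end.

Definition comtet1 (K : fieldType) (n : nat) (alpha : 'I_n -> K) (r : 'I_n -> nat)
  (m : nat) : K :=
  (\prod_(i < n) ('X - (alpha i)%:P) ^+ r i)`_m.

Definition integrand (K : fieldType) (n : nat) (alpha : 'I_n -> K) (r : 'I_n -> nat)
  (xs : seq nat) : K :=
  \prod_(i < n) ((\prod_(x <- xs) (x%:R : K)) - alpha i) ^+ r i.

(** The Volkenborn integral of [x ^ m] is the Bernoulli number
    [B_m = sum_l (-1)^l l! S(m, l) / (l + 1)]: writing [x ^ m] in the falling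
    factorial basis, [sum_(x < P) x ^_ l = P ^_ (l+1) / (l+1)], so that
    [P^-1 sum_(x < P) x ^ m] is a polynomial in [P] whose value at [P = 0], the
    p-adic limit of [P = p ^ N], is [B_m].  Integrating [x_1 ... x_k] to the
    [m]-th power one variable at a time therefore gives [B_m ^ k], and the
    integrand is the linear combination of these powers with the Comtet
    coefficients.  Finally [B_m ^ k] expands into the [k]-fold sum over
    [l_1, ..., l_k]. *)
From HB Require Import structures.
From mathcomp Require Import all_boot all_order all_algebra.
From mathcomp Require Import reals.
From mathcomp Require Import ring lra.
From Stdlib Require Import ClassicalEpsilon FunctionalExtensionality.
Set Implicit Arguments. Unset Strict Implicit. Unset Printing Implicit Defensive.
Import Order.TTheory GRing.Theory Num.Theory.
Local Open Scope ring_scope.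

Lemma mul_ffact x i : (x * x ^_ i = x ^_ i.+1 + i * x ^_ i)%N.
Proof.
rewrite ffactnSr; case: (leqP i x) => [le_ix | lt_xi]; last by rewrite ffact_small // !muln0.
by rewrite [X in (X + _)%N]mulnC -mulnDl subnK.
Qed.

Lemma stirling2_small m l : (m < l)%N -> stirling2 m l = 0%N.
Proof.
elim: m l => [|m IHm] [|l] //= lt_ml.
by rewrite (IHm l) ?(IHm l.+1) ?muln0 // ltnS ltnW.
Qed.

Lemma expn_stirling2 x m N : (m < N)%N ->
  (x ^ m = \sum_(l < N) stirling2 m l * x ^_ l)%N.
Proof.
elim: m N => [|m IHm] [|N] //= lt_mN.
  by rewrite big_ord_recl big1.
rewrite expnS (IHm N) // big_distrr /= big_ord_recl /= mul0n add0n.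
under eq_bigr => l _ do rewrite mulnCA mul_ffact mulnDr mulnCA.
under [in RHS]eq_bigr => l _ do rewrite add0n /bump leq0n add1n mulnDl.
rewrite !big_split /= addnC; congr (_ + _)%N.
pose f l := (l * stirling2 m l * x ^_ l)%N.
have fN : f N = 0%N by rewrite /f stirling2_small ?muln0 ?mul0n.
transitivity (\sum_(l < N.+1) f l)%N.
  by rewrite big_ord_recr /= fN addn0; apply: eq_bigr => l _; rewrite /f mulnA.
by rewrite big_ord_recl /f /= !mul0n add0n; apply: eq_bigr => l _; rewrite mulnA.
Qed.

Lemma sum_ffact l M : (l.+1 * \sum_(x < M) x ^_ l = M ^_ l.+1)%N.
Proof.
elim: M => [|M IHM]; first by rewrite big_ord0 muln0.
by rewrite big_ord_recr /= mulnDr IHM ffactSS [in RHS]mulSn mul_ffact; ring.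
Qed.

Lemma natr_ffact (K : nzRingType) n l :
  (n ^_ l)%:R = \prod_(j < l) (n%:R - j%:R) :> K.
Proof.
elim: l => [|l IHl]; first by rewrite big_ord0.
rewrite big_ord_recr /= -IHl ffactnSr natrM.
case: (leqP l n) => [le_ln | lt_nl]; first by rewrite natrB.
by rewrite ffact_small // !mul0r.
Qed.

Lemma sum_ffun_prod (K : nzRingType) k m (G : nat -> K) :
  \sum_(l : {ffun 'I_k -> 'I_m.+1}) \prod_(i < k) G (l i) =
  (\sum_(j < m.+1) G j) ^+ k.
Proof.
rewrite -(bigA_distr_bigA (fun (i : 'I_k) (j : 'I_m.+1) => G j)) /=.
by rewrite prodr_const card_ord.
Qed.

Lemma prod_opp_natS (K : comNzRingType) l :
  \prod_(j < l) - (j.+1)%:R = (-1) ^+ l * (l`!)%:R :> K.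
Proof.
elim: l => [|l IHl]; first by rewrite big_ord0 mul1r.
by rewrite big_ord_recr /= IHl factS natrM exprS; ring.
Qed.

(* With the convention [B_1 = -1/2]. *)
Definition bernoulli (K : fieldType) (m : nat) : K :=
  \sum_(l < m.+1) (-1) ^+ l * (l`!)%:R * (stirling2 m l)%:R / (l.+1)%:R.

Definition poly_in_prod (K : fieldType) (M : nat) (c : nat -> K) (xs : seq nat) : K :=
  \sum_(m < M) c m * (\prod_(x <- xs) (x%:R : K)) ^+ m.

Lemma poly_in_prod_cons (K : fieldType) M (c : nat -> K) x :
  (fun xs => poly_in_prod M c (x :: xs)) =
  poly_in_prod M (fun m => c m * (x%:R : K) ^+ m).
Proof.
apply: functional_extensionality => xs.
by apply: eq_bigr => m _; rewrite big_cons exprMn mulrA.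
Qed.

Lemma integrand_poly_in_prod (K : fieldType) n (alpha : 'I_n -> K) r :
  integrand alpha r = poly_in_prod (\sum_(i < n) r i).+1 (comtet1 alpha r).
Proof.
apply: functional_extensionality => xs.
have -> : integrand alpha r xs =
    (\prod_(i < n) ('X - (alpha i)%:P) ^+ r i).[\prod_(x <- xs) (x%:R : K)].
  rewrite horner_prod; apply: eq_bigr => i _.
  by rewrite horner_exp hornerXsubC.
rewrite (@horner_coef_wide _ (\sum_(i < n) r i).+1).
  by apply: eq_bigr => m _; rewrite mulrC.
apply: leq_trans (size_poly_prod_leq _ _) _.
under eq_bigr => i _ do rewrite size_exp_XsubC -addn1.
by rewrite big_split /= sum1_card leq_subLR addnS addnC.
Qed.

Section Volkenborn.
Variables (p : nat) (R : realType) (K : fieldType) (a : K -> R).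
Hypothesis p_prime : prime p.
Hypothesis a_abs : padic_abs p a.

Lemma pabs0 : a 0 = 0.
Proof. exact/(pa_eq0 a_abs). Qed.

Lemma pabs1 : a 1 = 1.
Proof.
have a1_neq0 : a 1 != 0 by apply/eqP => /(pa_eq0 a_abs)/eqP; rewrite oner_eq0.
by apply: (mulfI a1_neq0); rewrite mulr1 -(pa_mul a_abs) mulr1.
Qed.

Lemma pabsN1 : a (-1) = 1.
Proof.
have : a (-1) ^+ 2 == 1 by rewrite expr2 -(pa_mul a_abs) mulrNN mulr1 pabs1.
rewrite sqrf_eq1 => /orP[/eqP // | /eqP aN1].
by have := pa_ge0 a_abs (-1); rewrite aN1 ler0N1.
Qed.

Lemma pabsN x : a (- x) = a x.
Proof. by rewrite -mulN1r (pa_mul a_abs) pabsN1 mul1r. Qed.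

Lemma pabsX x n : a (x ^+ n) = a x ^+ n.
Proof. by elim: n => [|n IHn]; rewrite ?pabs1 // !exprS (pa_mul a_abs) IHn. Qed.

Lemma pabsD_lt x y e : a x < e -> a y < e -> a (x + y) < e.
Proof.
by move=> ax_lt ay_lt; apply: le_lt_trans (pa_ultra a_abs x y) _; rewrite gt_max ax_lt.
Qed.

Lemma pabs_natr_le1 n : a n%:R <= 1.
Proof.
elim: n => [|n IHn]; first by rewrite pabs0 ler01.
rewrite -addn1 natrD; apply: le_trans (pa_ultra a_abs _ _) _.
by rewrite ge_max IHn pabs1 lexx.
Qed.

Lemma pabs_natr_p_lt1 : a p%:R < 1.
Proof. by rewrite (pa_p a_abs) invf_lt1 ?ltr1n ?ltr0n ?prime_gt1 ?prime_gt0. Qed.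

(* A Bezout relation [p c = 1 + u n] gives [a 1 <= max (a p, a n)], and [a p < 1]. *)
Lemma pabs_natr_coprime n : coprime n p -> a n%:R = 1.
Proof.
move=> n_p_coprime; apply/le_anti; rewrite pabs_natr_le1 /=.
have [u _] := Bezoutl n (prime_gt0 p_prime).
rewrite gcdnC (eqP n_p_coprime) => /dvdnP[c bezout].
have : a (p%:R * c%:R - u%:R * n%:R) <= Num.max (a p%:R) (a n%:R).
  apply: le_trans (pa_ultra a_abs _ _) _; rewrite pabsN !(pa_mul a_abs).
  by apply: le_max2; [apply: ler_piMr | apply: ler_piMl];
    rewrite ?(pa_ge0 a_abs) ?pabs_natr_le1.
by rewrite -!natrM mulnC -bezout natrD addrK pabs1 le_max (lt_geF pabs_natr_p_lt1).
Qed.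

Lemma natr_neq0 n : (0 < n)%N -> n%:R != 0 :> K.
Proof.
move=> n_gt0; have [m p_m_coprime ->] := pfactor_coprime p_prime n_gt0.
have natr_nz j : a j%:R != 0 -> j%:R != 0 :> K.
  by apply: contra_neq => ->; rewrite pabs0.
rewrite natrM natrX mulf_neq0 ?expf_neq0 ?natr_nz //.
  by rewrite pabs_natr_coprime 1?coprime_sym ?oner_neq0.
by rewrite (pa_p a_abs) invr_neq0 // pnatr_eq0 -lt0n prime_gt0.
Qed.

Definition padic_cvg (u : nat -> K) (l : K) : Prop :=
  forall e, 0 < e -> exists N0, forall N, (N0 <= N)%N -> a (u N - l) < e.

Lemma eq_padic_cvg u v l : u =1 v -> padic_cvg u l -> padic_cvg v l.
Proof.
move=> eq_uv u_l e e_gt0; have [N0 uN] := u_l e e_gt0.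
by exists N0 => N /uN; rewrite eq_uv.
Qed.

Lemma padic_cvg_cst c : padic_cvg (fun=> c) c.
Proof. by move=> e e_gt0; exists 0%N => N _; rewrite subrr pabs0. Qed.

Lemma padic_cvgD u v l m :
  padic_cvg u l -> padic_cvg v m -> padic_cvg (fun N => u N + v N) (l + m).
Proof.
move=> u_l v_m e e_gt0; have [N1 uN] := u_l e e_gt0; have [N2 vN] := v_m e e_gt0.
exists (maxn N1 N2) => N; rewrite geq_max => /andP[/uN uN_lt /vN vN_lt].
by rewrite opprD addrACA; apply: pabsD_lt.
Qed.

Lemma padic_cvgM u v l m :
  padic_cvg u l -> padic_cvg v m -> padic_cvg (fun N => u N * v N) (l * m).
Proof.
move=> u_l v_m e e_gt0.
have al_ge0 := pa_ge0 a_abs l; have am_ge0 := pa_ge0 a_abs m.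
pose C := 1 + a l + a m; have C_gt0 : 0 < C by rewrite /C; lra.
pose d := Num.min 1 (e / C).
have d_gt0 : 0 < d by rewrite lt_min ltr01 divr_gt0.
have d_le1 : d <= 1 by rewrite ge_min lexx.
have dC_le : d * C <= e by rewrite -ler_pdivlMr // ge_min lexx orbT.
have [N1 uN] := u_l d d_gt0; have [N2 vN] := v_m d d_gt0.
exists (maxn N1 N2) => N; rewrite geq_max => /andP[/uN uN_lt /vN vN_lt].
have auN_le : a (u N) <= C.
  rewrite -(subrK l (u N)); apply: le_trans (pa_ultra a_abs _ _) _.
  by rewrite ge_max; apply/andP; split; rewrite /C; lra.
have auN_ge0 := pa_ge0 a_abs (u N); have avN_ge0 := pa_ge0 a_abs (v N - m).
have -> : u N * v N - l * m = u N * (v N - m) + (u N - l) * m by ring.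
by apply: pabsD_lt; rewrite (pa_mul a_abs) /C in auN_le dC_le *; nra.
Qed.

Lemma padic_cvg_unique u l m : padic_cvg u l -> padic_cvg u m -> l = m.
Proof.
move=> u_l u_m; case: (eqVneq l m) => // l_neq_m; exfalso.
have e_gt0 : 0 < a (l - m).
  rewrite lt_def (pa_ge0 a_abs) andbT; apply: contra_neq l_neq_m => /(pa_eq0 a_abs).
  by move/eqP; rewrite subr_eq0 => /eqP.
have [N1 uN1] := u_l _ e_gt0; have [N2 uN2] := u_m _ e_gt0.
have : a (l - m) < a (l - m).
  have split_lm : l - m = (u (maxn N1 N2) - m) - (u (maxn N1 N2) - l) by ring.
  rewrite {1}split_lm.
  apply: pabsD_lt; rewrite ?pabsN.
    exact: uN2 (leq_maxr _ _).
  exact: uN1 (leq_maxl _ _).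
by rewrite ltxx.
Qed.

Lemma padic_cvg_sum (I : Type) (s : seq I) (F : I -> nat -> K) (L : I -> K) :
  (forall i, padic_cvg (F i) (L i)) ->
  padic_cvg (fun N => \sum_(i <- s) F i N) (\sum_(i <- s) L i).
Proof.
move=> F_L; elim: s => [|i s IHs].
  by rewrite big_nil; apply: eq_padic_cvg (padic_cvg_cst 0) => N; rewrite big_nil.
by rewrite big_cons; apply: eq_padic_cvg (padic_cvgD (F_L i) IHs) => N; rewrite big_cons.
Qed.

Lemma padic_cvg_prod (I : Type) (s : seq I) (F : I -> nat -> K) (L : I -> K) :
  (forall i, padic_cvg (F i) (L i)) ->
  padic_cvg (fun N => \prod_(i <- s) F i N) (\prod_(i <- s) L i).
Proof.
move=> F_L; elim: s => [|i s IHs].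
  by rewrite big_nil; apply: eq_padic_cvg (padic_cvg_cst 1) => N; rewrite big_nil.
by rewrite big_cons; apply: eq_padic_cvg (padic_cvgM (F_L i) IHs) => N; rewrite big_cons.
Qed.

Lemma padic_cvg_expn : padic_cvg (fun N => (p ^ N)%:R) 0.
Proof.
move=> e e_gt0; have eV_ge0 : 0 <= e^-1 by rewrite invr_ge0 ltW.
have eV_lt := archi_boundP eV_ge0.
exists (Num.Def.archi_bound e^-1) => N bound_le_N.
have pN_gt0 : (0 < p ^ N)%N by rewrite expn_gt0 prime_gt0.
rewrite subr0 natrX pabsX (pa_p a_abs) exprVn -natrX.
rewrite -[e]invrK ltf_pV2 ?posrE ?ltr0n ?invr_gt0 //.
apply: lt_le_trans eV_lt _; rewrite ler_nat (leq_trans bound_le_N) // ltnW // ltn_expl //.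
exact: prime_gt1.
Qed.

Lemma has_volk_eq f l : has_volk p a f l -> volk p a f = l.
Proof.
move=> f_l.
exact: padic_cvg_unique (epsilon_spec (inhabits 0) _ (ex_intro _ l f_l)) f_l.
Qed.

Lemma sum_natr_exp P m : (0 < P)%N ->
  P%:R^-1 * \sum_(x < P) (x%:R : K) ^+ m =
  \sum_(l < m.+1) (stirling2 m l)%:R / (l.+1)%:R * \prod_(j < l) (P%:R - (j.+1)%:R).
Proof.
move=> P_gt0.
have -> : \sum_(x < P) (x%:R : K) ^+ m =
    \sum_(l < m.+1) (stirling2 m l)%:R * (\sum_(x < P) x ^_ l)%:R.
  under eq_bigr => x _ do rewrite -natrX (@expn_stirling2 x m m.+1) // natr_sum.
  rewrite exchange_big; apply: eq_bigr => l _ /=.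
  by rewrite natr_sum mulr_sumr; apply: eq_bigr => x _; rewrite natrM.
rewrite mulr_sumr; apply: eq_bigr => l _.
have l1_neq0 : (l.+1)%:R != 0 :> K by apply: natr_neq0.
have -> : (\sum_(x < P) x ^_ l)%:R = (P ^_ l.+1)%:R / (l.+1)%:R :> K.
  by rewrite -sum_ffact natrM mulrAC divff // mul1r.
rewrite natr_ffact big_ord_recl subr0.
rewrite (eq_bigr (fun j : 'I_l => P%:R - (j.+1)%:R)) //.
by field; rewrite addrC natr1 !natr_neq0.
Qed.

Lemma has_volk_natr_exp m : has_volk p a (fun x => (x%:R : K) ^+ m) (bernoulli K m).
Proof.
apply: (@eq_padic_cvg (fun N => \sum_(l < m.+1) (stirling2 m l)%:R / (l.+1)%:R *
    \prod_(j < l) ((p ^ N)%:R - (j.+1)%:R))) => [N|].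
  by rewrite sum_natr_exp // expn_gt0 prime_gt0.
have -> : bernoulli K m = \sum_(l < m.+1) (stirling2 m l)%:R / (l.+1)%:R *
    \prod_(j < l) (0 - (j.+1)%:R).
  apply: eq_bigr => l _; under eq_bigr => j _ do rewrite sub0r.
  by rewrite prod_opp_natS; ring.
apply: padic_cvg_sum => l; apply: padic_cvgM (padic_cvg_cst _) _.
by apply: padic_cvg_prod => j; apply: padic_cvgD padic_cvg_expn (padic_cvg_cst _).
Qed.

Lemma has_volk_poly M (d : nat -> K) :
  has_volk p a (fun x => \sum_(m < M) d m * (x%:R : K) ^+ m)
    (\sum_(m < M) d m * bernoulli K m).
Proof.
apply: (@eq_padic_cvg (fun N => \sum_(m < M) d m *
    ((p ^ N)%:R^-1 * \sum_(x < p ^ N) (x%:R : K) ^+ m))) => [N|].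
  rewrite [in RHS]exchange_big mulr_sumr; apply: eq_bigr => m _ /=.
  by rewrite -mulr_sumr mulrCA.
apply: padic_cvg_sum => m; apply: padic_cvgM (padic_cvg_cst _) _.
exact: has_volk_natr_exp.
Qed.

Lemma has_volk_poly_in_prod_cons k M c :
  (forall c', mvolk p a k (poly_in_prod M c') = \sum_(m < M) c' m * bernoulli K m ^+ k) ->
  has_volk p a (fun x => mvolk p a k (fun xs => poly_in_prod M c (x :: xs)))
    (\sum_(m < M) c m * bernoulli K m ^+ k.+1).
Proof.
move=> mvolk_k.
have -> : (fun x => mvolk p a k (fun xs => poly_in_prod M c (x :: xs))) =
    (fun x => \sum_(m < M) (c m * bernoulli K m ^+ k) * (x%:R : K) ^+ m).
  apply: functional_extensionality => x; rewrite poly_in_prod_cons mvolk_k.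
  by apply: eq_bigr => m _; rewrite mulrAC.
have -> : \sum_(m < M) c m * bernoulli K m ^+ k.+1 =
    \sum_(m < M) (c m * bernoulli K m ^+ k) * bernoulli K m.
  by apply: eq_bigr => m _; rewrite exprSr mulrA.
exact: (has_volk_poly M (fun m => c m * bernoulli K m ^+ k)).
Qed.

Lemma mvolk_poly_in_prod k M c :
  mvolk p a k (poly_in_prod M c) = \sum_(m < M) c m * bernoulli K m ^+ k.
Proof.
elim: k M c => [|k IHk] M c.
  by apply: eq_bigr => m _; rewrite big_nil expr1n expr0.
exact/has_volk_eq/has_volk_poly_in_prod_cons.
Qed.

End Volkenborn.

Theorem theorem2p2 (p : nat) (R : realType) (K : fieldType) (a : K -> R)
  (k n : nat) (alpha : 'I_n -> K) (r : 'I_n -> nat) :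
  prime p -> padic_abs p a -> (1 <= k)%N ->
  (forall i, a (alpha i) <= 1) ->
  let D := \sum_(m < (\sum_(i < n) r i).+1)
             comtet1 alpha r m *
             \sum_(l : {ffun 'I_k -> 'I_m.+1})
               \prod_(i < k)
                 ((-1) ^+ (l i) * ((l i)`!)%:R * (stirling2 m (l i))%:R
                  / ((l i).+1)%:R) in
  has_volk p a (fun x1 => mvolk p a k.-1 (fun xs => integrand alpha r (x1 :: xs))) D
  /\ mvolk p a k (integrand alpha r) = D.
Proof.
(* The integrand enters only through its coefficients, so the [alpha i]
   need not lie in [Z_p]. *)
move=> p_prime a_abs k_ge1 _ D.
set M := (\sum_(i < n) r i).+1 in D *.
have -> : D = \sum_(m < M) comtet1 alpha r m * bernoulli K m ^+ k.
  apply: eq_bigr => m _.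
  pose G j := (-1) ^+ j * (j`!)%:R * (stirling2 m j)%:R / (j.+1)%:R : K.
  by rewrite (sum_ffun_prod _ _ G).
rewrite integrand_poly_in_prod -/M; case: k k_ge1 {D} => // k _; split.
  by apply: has_volk_poly_in_prod_cons => // c; apply: mvolk_poly_in_prod.
exact: mvolk_poly_in_prod.
Qed.
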